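(* Let $L$ be a finite-dimensional Lie superalgebra with free presentation $0\to R\to F\to L\to 0$, and let $(T,\lambda)$ be a universal element of $C(L)$. Then $\mathrm{Ker}(\lambda)\cong (F'\cap R)/[F,R]$.
   Context: Lie superalgebras over a field of characteristic $\neq 2,3$; homomorphisms are even. A free presentation of $L$ is a free Lie superalgebra $F$ on a $\mathbb{Z}_2$-graded set with a surjective homomorphism $F\to L$ whose kernel is $R$; $F'=[F,F]$. $C(L)$ is the class of pairs $(K,\lambda)$ with $\lambda:K\to L$ a surjective homomorphism and $\mathrm{Ker}(\lambda)\subseteq[K,K]\cap Z(K)$, $Z(K)$ the center. $(T,\sigma)\in C(L)$ is universal if for every $(K,\lambda)\in C(L)$ there is a homomorphism $\tau:T\to K$ with $\lambda\circ\tau=\sigma$. *)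

From HB Require Import structures.
From mathcomp Require Import all_boot all_order all_algebra.
Set Implicit Arguments. Unset Strict Implicit. Unset Printing Implicit Defensive.
Import GRing.Theory.
Local Open Scope ring_scope.

Definition ssign (K : fieldType) (b : bool) : K := if b then -1 else 1.

Record lieSuper (K : fieldType) := LieSuper {
  lsT :> lmodType K;
  lsdeg : bool -> lsT -> Prop;
  lsbr : lsT -> lsT -> lsT;
  lsdeg0 : forall b, lsdeg b 0;
  lsdegD : forall b x y, lsdeg b x -> lsdeg b y -> lsdeg b (x + y);
  lsdegZ : forall b (a : K) x, lsdeg b x -> lsdeg b (a *: x);
  lsdeg_sum : forall x, exists x0 x1,
      lsdeg false x0 /\ lsdeg true x1 /\ x = x0 + x1;
  lsdeg_direct : forall x, lsdeg false x -> lsdeg true x -> x = 0;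
  lsbr_linl : forall (a : K) x y z, lsbr (a *: x + y) z = a *: lsbr x z + lsbr y z;
  lsbr_linr : forall (a : K) x y z, lsbr z (a *: x + y) = a *: lsbr z x + lsbr z y;
  lsbr_deg : forall i j x y, lsdeg i x -> lsdeg j y -> lsdeg (i (+) j) (lsbr x y);
  lsbr_anti : forall i j x y, lsdeg i x -> lsdeg j y ->
      lsbr x y = - (ssign K (i && j) *: lsbr y x);
  lsbr_jacobi : forall i j k x y z, lsdeg i x -> lsdeg j y -> lsdeg k z ->
      ssign K (i && k) *: lsbr x (lsbr y z)
    + ssign K (j && i) *: lsbr y (lsbr z x)
    + ssign K (k && j) *: lsbr z (lsbr x y) = 0
}.

Arguments lsdeg {K} _ _ _.
Arguments lsbr {K} _ _ _.

Section LieDefs.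
Variable K : fieldType.

Definition ls_findim (L : lieSuper K) : Prop :=
  exists (n : nat) (v : 'I_n -> L), forall x : L,
    exists c : 'I_n -> K, x = \sum_(i < n) c i *: v i.

Definition ls_hom (L M : lieSuper K) (f : L -> M) : Prop :=
  [/\ forall (a : K) (x y : L), f (a *: x + y) = a *: f x + f y,
      forall b x, lsdeg L b x -> lsdeg M b (f x)
    & forall x y, f (lsbr L x y) = lsbr M (f x) (f y)].

Definition ls_span (L : lieSuper K) (P : L -> Prop) : L -> Prop :=
  fun x => exists (n : nat) (c : 'I_n -> K) (v : 'I_n -> L),
    (forall i, P (v i)) /\ x = \sum_(i < n) c i *: v i.

Definition ls_brk (L : lieSuper K) (A B : L -> Prop) : L -> Prop :=
  ls_span (fun z => exists a b, A a /\ B b /\ z = lsbr L a b).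

Definition ls_all (L : lieSuper K) : L -> Prop := fun _ => True.

Definition ls_derived (L : lieSuper K) : L -> Prop := ls_brk (@ls_all L) (@ls_all L).

Definition ls_center (L : lieSuper K) : L -> Prop :=
  fun z => forall x, lsbr L z x = 0.

Definition ls_ker (L M : lieSuper K) (f : L -> M) : L -> Prop :=
  fun x => f x = 0.

Definition ls_free (F : lieSuper K) (X : Type) (deg : X -> bool) (iota : X -> F)
  : Prop :=
  (forall x, lsdeg F (deg x) (iota x)) /\
  forall (M : lieSuper K) (f : X -> M), (forall x, lsdeg M (deg x) (f x)) ->
    exists g : F -> M, [/\ ls_hom g, (forall x, g (iota x) = f x) &
      forall g' : F -> M, ls_hom g' -> (forall x, g' (iota x) = f x) ->
        forall y, g' y = g y].

Definition in_C (L T : lieSuper K) (lam : T -> L) : Prop :=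
  [/\ ls_hom lam, (forall y : L, exists x, lam x = y)
    & forall z, ls_ker lam z -> ls_derived z /\ ls_center z].

Definition C_universal (L T : lieSuper K) (sig : T -> L) : Prop :=
  in_C sig /\
  forall (M : lieSuper K) (lam : M -> L), in_C lam ->
    exists tau : T -> M, ls_hom tau /\ forall x, lam (tau x) = sig x.

(* The sub-superalgebra A of T is isomorphic (as a Lie superalgebra,
   via an even isomorphism) to the quotient J / I of subspaces I <= J of F:
   expressed by an even, linear, bracket-preserving map phi defined on J,
   mapping J onto A, whose kernel on J is exactly I (so that phi induces
   the isomorphism J/I ~= A). *)
Definition subquot_iso (T F : lieSuper K) (A : T -> Prop) (J I : F -> Prop)
  : Prop :=
  (forall x, I x -> J x) /\
  exists phi : F -> T,
  [/\ forall (a : K) x y, J x -> J y -> phi (a *: x + y) = a *: phi x + phi y,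
      forall b x, J x -> lsdeg F b x -> lsdeg T b (phi x),
      forall x y, J x -> J y -> phi (lsbr F x y) = lsbr T (phi x) (phi y),
      forall x, J x -> A (phi x)
    & forall z, A z -> exists x, J x /\ phi x = z]
  /\ (forall x, J x -> (phi x = 0 <-> I x)).

End LieDefs.

(* Because F is free and lam is onto and even, pi lifts to g : F -> T with
   lam \o g = pi.  As Ker lam is central, [a, b] only depends on lam a and
   lam b; hence g maps F' onto T' and so F' /\ R onto Ker lam, and g kills
   [F, R].  Conversely let x in F' /\ R with g x = 0 but x \notin [F, R].
   Zorn's lemma gives a graded subspace S with [F, R] <= S <= R, x \notin S
   and R <= F' + S.  Then F/S -> L lies in C(L), so universality yields
   tau : T -> F/S; tau \o g and the projection F -> F/S both lift pi modulo a
   central kernel, hence agree on F', which forces x in S. *)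

From HB Require Import structures.
From mathcomp Require Import all_boot all_order all_algebra.
From mathcomp Require Import boolp classical_sets.
Set Implicit Arguments. Unset Strict Implicit. Unset Printing Implicit Defensive.
Import GRing.Theory.
Local Open Scope ring_scope.

Section LinearFun.
Variables (K : fieldType) (U V : lmodType K) (f : U -> V).
Hypothesis f_lin : linear f.

Let fL : {linear U -> V} := HB.pack f (GRing.isLinear.Build K U V *:%R f f_lin).

Lemma lin0 : f 0 = 0. Proof. exact: raddf0 fL. Qed.
Lemma linD x y : f (x + y) = f x + f y. Proof. exact: raddfD fL x y. Qed.
Lemma linN x : f (- x) = - f x. Proof. exact: raddfN fL x. Qed.
Lemma linB x y : f (x - y) = f x - f y. Proof. exact: raddfB fL x y. Qed.
Lemma linZ a x : f (a *: x) = a *: f x. Proof. exact: linearZZ fL a x. Qed.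

End LinearFun.

Section Subspace.
Variables (K : fieldType) (V : lmodType K).

Definition is_subspace (S : V -> Prop) :=
  S 0 /\ forall a x y, S x -> S y -> S (a *: x + y).

Variables (S : V -> Prop) (S_sub : is_subspace S).

Lemma subspace0 : S 0. Proof. by case: S_sub. Qed.
Lemma subspaceD x y : S x -> S y -> S (x + y).
Proof. by case: S_sub => _ S_lin Sx Sy; rewrite -[x]scale1r; apply: S_lin. Qed.
Lemma subspaceZ a x : S x -> S (a *: x).
Proof. by case: S_sub => S0 S_lin Sx; rewrite -[_ *: x]addr0; apply: S_lin. Qed.
Lemma subspaceN x : S x -> S (- x).
Proof. by rewrite -scaleN1r; apply: subspaceZ. Qed.
Lemma subspaceB x y : S x -> S y -> S (x - y).
Proof. by move=> Sx Sy; apply: subspaceD (subspaceN Sy). Qed.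

End Subspace.

Lemma is_subspace_eq0 (K : fieldType) (V : lmodType K) : is_subspace (fun x : V => x = 0).
Proof. by split=> // a x y -> ->; rewrite scaler0 addr0. Qed.

Lemma is_subspace_preim (K : fieldType) (U V : lmodType K) (f : U -> V) (S : V -> Prop) :
  linear f -> is_subspace S -> is_subspace (fun x => S (f x)).
Proof.
move=> f_lin [S0 S_lin]; split=> [|a x y Sx Sy]; first by rewrite lin0.
by rewrite f_lin; apply: S_lin.
Qed.

Section Span.
Variables (K : fieldType) (A : lieSuper K) (P : A -> Prop).

Lemma ls_span_ind (Q : A -> Prop) :
  is_subspace Q -> (forall v, P v -> Q v) -> forall x, ls_span P x -> Q x.
Proof.
move=> [Q0 Q_lin] PQ _ [n [c [v [Pv ->]]]].
elim: n c v Pv => [|n IHn] c v Pv; first by rewrite big_ord0.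
by rewrite big_ord_recr /= addrC; apply: Q_lin; [apply: PQ | apply: IHn].
Qed.

Lemma ls_span_sub v : P v -> ls_span P v.
Proof. by exists 1%N, (fun=> 1), (fun=> v); rewrite big_ord1 scale1r. Qed.

Lemma ls_span_subspace : is_subspace (ls_span P).
Proof.
split; first by exists 0%N, (fun=> 0), (fun=> 0); rewrite big_ord0; split=> // -[].
move=> a _ _ [n [c [v [Pv ->]]]] [m [d [w [Pw ->]]]].
exists (n + m)%N, (fun i => match split i with inl j => a * c j | inr k => d k end),
  (fun i => match split i with inl j => v j | inr k => w k end).
split=> [i|]; first by case: (split i).
rewrite big_split_ord scaler_sumr; congr (_ + _); apply: eq_bigr => i _.
  by rewrite (unsplitK (inl i)) scalerA.
by rewrite (unsplitK (inr i)).
Qed.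

End Span.

Lemma ls_span_mono (K : fieldType) (A : lieSuper K) (P Q : A -> Prop) :
  (forall v, P v -> Q v) -> forall x, ls_span P x -> ls_span Q x.
Proof.
move=> PQ; apply: ls_span_ind; first exact: ls_span_subspace.
by move=> v /PQ; apply: ls_span_sub.
Qed.

Section Grading.
Variables (K : fieldType) (A : lieSuper K).
Implicit Types (x y z : A) (P Q S : A -> Prop).

Lemma lsbr_linearl z : linear (lsbr A ^~ z). Proof. by move=> a x y; apply: lsbr_linl. Qed.
Lemma lsbr_linearr z : linear (lsbr A z). Proof. by move=> a x y; apply: lsbr_linr. Qed.

Lemma lsbr0r z : lsbr A z 0 = 0. Proof. exact: lin0 (lsbr_linearr z). Qed.
Lemma lsbrDl x y z : lsbr A (x + y) z = lsbr A x z + lsbr A y z.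
Proof. exact: (linD (lsbr_linearl z) x y). Qed.
Lemma lsbrDr x y z : lsbr A z (x + y) = lsbr A z x + lsbr A z y.
Proof. exact: (linD (lsbr_linearr z) x y). Qed.

Lemma lsbrBl x y z : lsbr A (x - y) z = lsbr A x z - lsbr A y z.
Proof. exact: (linB (lsbr_linearl z) x y). Qed.
Lemma lsbrBr x y z : lsbr A z (x - y) = lsbr A z x - lsbr A z y.
Proof. exact: (linB (lsbr_linearr z) x y). Qed.

Lemma lsdeg_subspace b : is_subspace (lsdeg A b).
Proof. by split=> [|a x y Dx Dy]; [apply: lsdeg0 | apply/lsdegD/Dy/lsdegZ]. Qed.

Definition ls_part (b : bool) x : A :=
  let: exist x0 ex1 := cid (lsdeg_sum x) in if b then sval (cid ex1) else x0.

Lemma ls_partP b x : lsdeg A b (ls_part b x).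
Proof. by rewrite /ls_part; case: cid => x0 ?; case: cid => x1 [? []]; case: b. Qed.

Lemma ls_part_sum x : ls_part false x + ls_part true x = x.
Proof. by rewrite /ls_part; case: cid => x0 ?; case: cid => x1 [_ [_ e]] /=; rewrite e. Qed.

Lemma ls_part_decomp u v b : lsdeg A false u -> lsdeg A true v ->
  ls_part b (u + v) = if b then v else u.
Proof.
move=> Du Dv.
have e : u - ls_part false (u + v) = ls_part true (u + v) - v.
  by apply/eqP; rewrite subr_eq addrAC eq_sym subr_eq addrC ls_part_sum.
have e0 : u - ls_part false (u + v) = 0.
  apply: lsdeg_direct; first exact/(subspaceB (lsdeg_subspace _))/ls_partP.
  by rewrite e; apply/(subspaceB (lsdeg_subspace _))/Dv/ls_partP.
by case: b; [rewrite e in e0 | apply/esym]; apply/subr0_eq.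
Qed.

Lemma ls_part_homog b c x : lsdeg A b x -> ls_part c x = if c == b then x else 0.
Proof.
case: b => Dx.
  by rewrite -{1}[x]add0r ls_part_decomp //; [case: c | apply: lsdeg0].
by rewrite -{1}[x]addr0 ls_part_decomp //; [case: c | apply: lsdeg0].
Qed.

Lemma ls_part_linear b : linear (ls_part b).
Proof.
move=> a x y; set x0 := ls_part false x; set x1 := ls_part true x.
set y0 := ls_part false y; set y1 := ls_part true y.
have -> : a *: x + y = (a *: x0 + y0) + (a *: x1 + y1).
  by rewrite -{1}(ls_part_sum x) -{1}(ls_part_sum y) scalerDr addrACA.
by rewrite ls_part_decomp; [case: b | apply: (lsdeg_subspace _).2; apply: ls_partP..].
Qed.

Definition ls_graded S := forall b x, S x -> S (ls_part b x).

Lemma lsbr_parts_ind Q x y : (forall u v, Q u -> Q v -> Q (u + v)) ->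
  (forall i j, Q (lsbr A (ls_part i x) (ls_part j y))) -> Q (lsbr A x y).
Proof.
move=> QD Qij; rewrite -(ls_part_sum x) -(ls_part_sum y) !lsbrDl !lsbrDr.
by apply: QD (QD _ _ (Qij _ _) (Qij _ _)) (QD _ _ (Qij _ _) (Qij _ _)).
Qed.

Lemma lsbr_closed_swap S Q : is_subspace Q -> ls_graded S ->
  (forall s x, S s -> Q (lsbr A s x)) <-> (forall s x, S s -> Q (lsbr A x s)).
Proof.
move=> Q_sub S_gr.
have swap x y : (forall i j, Q (lsbr A (ls_part j y) (ls_part i x))) -> Q (lsbr A x y).
  move=> Qji; apply: lsbr_parts_ind => [u v|i j]; first exact: subspaceD.
  rewrite (lsbr_anti (ls_partP i x) (ls_partP j y)).
  exact/(subspaceN Q_sub)/(subspaceZ Q_sub).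
by split=> SQ s x Ss; apply: swap => i j; apply/SQ/S_gr.
Qed.

Lemma ls_span_graded P : (forall v, P v -> forall b, ls_span P (ls_part b v)) ->
  ls_graded (ls_span P).
Proof.
move=> hP b; apply: ls_span_ind => [|v Pv]; last exact: hP.
exact: is_subspace_preim (ls_part_linear b) (ls_span_subspace P).
Qed.

Lemma ls_brk_graded P Q : ls_graded P -> ls_graded Q -> ls_graded (ls_brk P Q).
Proof.
move=> P_gr Q_gr; apply: ls_span_graded => _ [p [q [Pp [Qq ->]]]] b.
apply: (@lsbr_parts_ind (fun v => ls_brk P Q (ls_part b v))) => [u v|i j].
  by rewrite (linD (ls_part_linear b)); apply: (subspaceD (ls_span_subspace _)).
rewrite (ls_part_homog _ (lsbr_deg (ls_partP i p) (ls_partP j q))); case: eqP => _.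
  apply: ls_span_sub; exists (ls_part i p), (ls_part j q).
  by split; [apply: P_gr | split; [apply: Q_gr |]].
exact: subspace0 (ls_span_subspace _).
Qed.

End Grading.

Section Homomorphisms.
Variables (K : fieldType) (A B : lieSuper K) (f : A -> B).
Hypothesis f_hom : ls_hom f.

Lemma ls_hom_linear : linear f. Proof. by case: f_hom. Qed.
Lemma ls_hom_deg b x : lsdeg A b x -> lsdeg B b (f x). Proof. by case: f_hom => _ + _; apply. Qed.
Lemma ls_hom_br x y : f (lsbr A x y) = lsbr B (f x) (f y). Proof. by case: f_hom. Qed.

Lemma ls_hom_part b x : f (ls_part b x) = ls_part b (f x).
Proof.
rewrite -{2}(ls_part_sum x) (linD ls_hom_linear).
by rewrite ls_part_decomp; [case: b | apply/ls_hom_deg/ls_partP..].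
Qed.

Lemma ls_ker_subspace : is_subspace (ls_ker f).
Proof. exact: is_subspace_preim ls_hom_linear (is_subspace_eq0 B). Qed.

Lemma ls_ker_graded : ls_graded (ls_ker f).
Proof. by move=> b x fx0; rewrite /ls_ker ls_hom_part fx0 (lin0 (ls_part_linear b)). Qed.

Lemma ls_ker_ideal x r : ls_ker f r -> ls_ker f (lsbr A x r).
Proof. by rewrite /ls_ker ls_hom_br => ->; rewrite lsbr0r. Qed.

Lemma ls_hom_derived x : ls_derived x -> ls_derived (f x).
Proof.
move: x; apply: (ls_span_ind (Q := fun x => ls_derived (f x))) => [|_ [a [b [_ [_ ->]]]]].
  exact: is_subspace_preim ls_hom_linear (ls_span_subspace _).
by rewrite ls_hom_br; apply: ls_span_sub; exists (f a), (f b).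
Qed.

Hypothesis f_surj : forall y, exists x, f x = y.

Lemma ls_hom_lift_homog b y : lsdeg B b y -> exists2 x, lsdeg A b x & f x = y.
Proof.
move=> Dy; have [x fx] := f_surj y; exists (ls_part b x); first exact: ls_partP.
by rewrite ls_hom_part fx (ls_part_homog _ Dy) eqxx.
Qed.

End Homomorphisms.

Lemma ls_hom_comp (K : fieldType) (A B C : lieSuper K) (f : A -> B) (g : B -> C) :
  ls_hom f -> ls_hom g -> ls_hom (g \o f).
Proof.
move=> [f_lin f_deg f_br] [g_lin g_deg g_br]; split=> [a x y|b x Dx|x y] /=.
- by rewrite f_lin g_lin.
- exact/g_deg/f_deg.
- by rewrite f_br g_br.
Qed.

Lemma ls_free_lift (K : fieldType) (X : Type) (deg : X -> bool) (F : lieSuper K)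
    (iota : X -> F) (M N : lieSuper K) (mu : M -> N) (h : F -> N) :
  ls_free deg iota -> ls_hom mu -> (forall y, exists t, mu t = y) -> ls_hom h ->
  exists2 g : F -> M, ls_hom g & forall y, mu (g y) = h y.
Proof.
move=> [iota_deg F_univ] mu_hom mu_surj h_hom.
have hdeg x : lsdeg N (deg x) (h (iota x)) by apply/(ls_hom_deg h_hom)/iota_deg.
have lift x : exists t, lsdeg M (deg x) t /\ mu t = h (iota x).
  by have [t] := ls_hom_lift_homog mu_hom mu_surj (hdeg x); exists t.
have [t tP] := choice lift.
have [g [g_hom g_iota _]] := F_univ M t (fun x => (tP x).1).
have [h0 [_ _ h_uniq]] := F_univ N (h \o iota) hdeg.
have h_h0 := h_uniq _ h_hom (fun=> erefl).
have g_h0 : forall y, mu (g y) = h0 y.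
  by apply: h_uniq (ls_hom_comp g_hom mu_hom) _ => x /=; rewrite g_iota (tP x).2.
by exists g => // y; rewrite g_h0 h_h0.
Qed.

Section CentralExtension.
Variables (K : fieldType) (L M : lieSuper K) (mu : M -> L).
Hypothesis mu_C : in_C mu.

Lemma in_C_hom : ls_hom mu. Proof. by case: mu_C. Qed.
Lemma in_C_surj y : exists x, mu x = y. Proof. by case: mu_C. Qed.
Lemma in_C_ker_derived k : mu k = 0 -> ls_derived k.
Proof. by case: mu_C => _ _ /[apply] -[]. Qed.

Lemma in_C_ker_centrall k x : mu k = 0 -> lsbr M k x = 0.
Proof. by case: mu_C => _ _ /[apply] -[_]; apply. Qed.

Lemma in_C_ker_centralr k x : mu k = 0 -> lsbr M x k = 0.
Proof.
apply: (lsbr_closed_swap (is_subspace_eq0 M) (ls_ker_graded in_C_hom)).1.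
exact: in_C_ker_centrall.
Qed.

Lemma in_C_lsbr_eq x x' y y' : mu x = mu x' -> mu y = mu y' -> lsbr M x y = lsbr M x' y'.
Proof.
have mu_lin := ls_hom_linear in_C_hom.
move=> ex ey; have kx : mu (x' - x) = 0 by rewrite (linB mu_lin) ex subrr.
have ky : mu (y' - y) = 0 by rewrite (linB mu_lin) ey subrr.
rewrite -[x'](subrK x) -[y'](subrK y) lsbrDl (in_C_ker_centrall _ kx) add0r.
by rewrite lsbrDr (in_C_ker_centralr _ ky) add0r.
Qed.

Lemma in_C_derived_agree (F : lieSuper K) (h1 h2 : F -> M) :
  ls_hom h1 -> ls_hom h2 -> (forall y, mu (h1 y) = mu (h2 y)) ->
  forall x, ls_derived x -> h1 x = h2 x.
Proof.
move=> h1_hom h2_hom e12; have h1_lin := ls_hom_linear h1_hom.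
have h2_lin := ls_hom_linear h2_hom.
apply: (ls_span_ind (Q := fun x => h1 x = h2 x)) => [|_ [a [b [_ [_ ->]]]]].
  by split=> [|c x y e1 e2]; rewrite ?lin0 // h1_lin h2_lin e1 e2.
by rewrite (ls_hom_br h1_hom) (ls_hom_br h2_hom); apply: in_C_lsbr_eq.
Qed.

End CentralExtension.

Definition ls_graded_ideal (K : fieldType) (A : lieSuper K) (S : A -> Prop) :=
  [/\ is_subspace S, ls_graded S & forall s x, S s -> S (lsbr A x s)].

Section Quotient.
Variables (K : fieldType) (A : lieSuper K) (S : A -> Prop).
Hypothesis S_ideal : ls_graded_ideal S.

Let S_sub : is_subspace S. Proof. by case: S_ideal. Qed.
Let S_gr : ls_graded S. Proof. by case: S_ideal. Qed.
Let S_brl s x : S s -> S (lsbr A x s). Proof. by case: S_ideal => _ _; apply. Qed.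
Let S_brr s x : S s -> S (lsbr A s x). Proof. by move: s x; apply/(lsbr_closed_swap S_sub S_gr). Qed.

Definition coset (y : A) : A -> Prop := fun z => S (z - y).
Definition quot_type := {C : A -> Prop | exists y, C = coset y}.
HB.instance Definition _ := gen_eqMixin quot_type.
HB.instance Definition _ := gen_choiceMixin quot_type.

Definition quot_map (y : A) : quot_type := exist _ (coset y) (ex_intro _ y erefl).
Definition quot_rep (q : quot_type) : A := sval (cid (svalP q)).

Lemma quot_repK q : quot_map (quot_rep q) = q.
Proof. by case: q => C hC; apply: eq_exist; rewrite /quot_rep /=; case: cid. Qed.

Lemma quot_map_eq y z : quot_map y = quot_map z <-> S (y - z).
Proof.
split=> [/(congr1 sval) /= eq_yz | Syz].
  by have := subspace0 S_sub; rewrite -(subrr y) -/(coset y y) eq_yz.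
apply: eq_exist; apply: funext => w; apply: propext; rewrite /coset.
split=> Sw.
  by rewrite -(subrK y w) -addrA; apply: (subspaceD S_sub).
by rewrite -(subrK z w) -addrA -(opprB y z); apply: (subspaceB S_sub).
Qed.

Lemma quot_rep_map y : S (quot_rep (quot_map y) - y).
Proof. by apply/quot_map_eq; rewrite quot_repK. Qed.

Lemma quot_map_linear_rep (a : K) y z :
  quot_map (a *: quot_rep (quot_map y) + quot_rep (quot_map z)) = quot_map (a *: y + z).
Proof.
apply/quot_map_eq; rewrite opprD addrACA -scalerBr.
by apply: (subspaceD S_sub); [apply: (subspaceZ S_sub) |]; apply: quot_rep_map.
Qed.

Definition quot_lin (a : K) q r := quot_map (a *: quot_rep q + quot_rep r).
Definition quot_add q r := quot_lin 1 q r.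
Definition quot_scale a q := quot_lin a q (quot_map 0).
Definition quot_opp q := quot_scale (-1) q.

Lemma quot_addE y z : quot_add (quot_map y) (quot_map z) = quot_map (y + z).
Proof. by rewrite /quot_add /quot_lin quot_map_linear_rep scale1r. Qed.
Lemma quot_scaleE a y : quot_scale a (quot_map y) = quot_map (a *: y).
Proof. by rewrite /quot_scale /quot_lin quot_map_linear_rep addr0. Qed.
Lemma quot_oppE y : quot_opp (quot_map y) = quot_map (- y).
Proof. by rewrite /quot_opp quot_scaleE scaleN1r. Qed.

Lemma quot_addA : associative quot_add.
Proof.
by move=> q1 q2 q3; rewrite -[q1]quot_repK -[q2]quot_repK -[q3]quot_repK !quot_addE addrA.
Qed.
Lemma quot_addC : commutative quot_add.
Proof. by move=> q1 q2; rewrite -[q1]quot_repK -[q2]quot_repK !quot_addE addrC. Qed.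
Lemma quot_add0 : left_id (quot_map 0) quot_add.
Proof. by move=> q; rewrite -[q]quot_repK quot_addE add0r. Qed.
Lemma quot_addN : left_inverse (quot_map 0) quot_opp quot_add.
Proof. by move=> q; rewrite -[q]quot_repK quot_oppE quot_addE addNr. Qed.

HB.instance Definition _ :=
  GRing.isZmodule.Build quot_type quot_addA quot_addC quot_add0 quot_addN.

Lemma quot_scaleA a b q : quot_scale a (quot_scale b q) = quot_scale (a * b) q.
Proof. by rewrite -[q]quot_repK !quot_scaleE scalerA. Qed.
Lemma quot_scale1 : left_id 1 quot_scale.
Proof. by move=> q; rewrite -[q]quot_repK quot_scaleE scale1r. Qed.
Lemma quot_scaleDr : right_distributive quot_scale quot_add.
Proof.
move=> a q1 q2; rewrite -[q1]quot_repK -[q2]quot_repK.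
by rewrite quot_addE !quot_scaleE quot_addE scalerDr.
Qed.
Lemma quot_scaleDl q : {morph quot_scale^~ q : a b / a + b >-> quot_add a b}.
Proof. by move=> a b; rewrite -[q]quot_repK !quot_scaleE quot_addE scalerDl. Qed.

HB.instance Definition _ := GRing.Zmodule_isLmodule.Build K quot_type
  quot_scaleA quot_scale1 quot_scaleDr quot_scaleDl.

Lemma quot_map_linear : linear quot_map.
Proof.
move=> a y z; rewrite -[_ + quot_map z]/(quot_add (quot_scale a (quot_map y)) (quot_map z)).
by rewrite quot_scaleE quot_addE.
Qed.

Lemma quot_map_eq0 y : quot_map y = 0 <-> S y.
Proof. by rewrite -[0]/(quot_map 0) quot_map_eq subr0. Qed.

Definition quot_deg b q := exists2 y, lsdeg A b y & q = quot_map y.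
Definition quot_br q r := quot_map (lsbr A (quot_rep q) (quot_rep r)).

Lemma quot_brE y z : quot_br (quot_map y) (quot_map z) = quot_map (lsbr A y z).
Proof.
apply/quot_map_eq; set y' := quot_rep _; set z' := quot_rep _.
have -> : lsbr A y' z' - lsbr A y z = lsbr A (y' - y) z' + lsbr A y (z' - z).
  by rewrite lsbrBl lsbrBr addrA subrK.
by apply: (subspaceD S_sub); [apply: S_brr | apply: S_brl]; apply: quot_rep_map.
Qed.

Lemma quot_deg0 b : quot_deg b 0.
Proof. by exists 0; first exact: lsdeg0. Qed.

Lemma quot_degD b q r : quot_deg b q -> quot_deg b r -> quot_deg b (q + r).
Proof.
move=> [y Dy ->] [z Dz ->]; exists (y + z); first exact: lsdegD.
by rewrite (linD quot_map_linear).
Qed.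

Lemma quot_degZ b (a : K) q : quot_deg b q -> quot_deg b (a *: q).
Proof.
move=> [y Dy ->]; exists (a *: y); first exact: lsdegZ.
by rewrite (linZ quot_map_linear).
Qed.

Lemma quot_deg_sum q :
  exists q0 q1, quot_deg false q0 /\ quot_deg true q1 /\ q = q0 + q1.
Proof.
exists (quot_map (ls_part false (quot_rep q))), (quot_map (ls_part true (quot_rep q))).
split; first by exists (ls_part false (quot_rep q)); first exact: ls_partP.
split; first by exists (ls_part true (quot_rep q)); first exact: ls_partP.
by rewrite -(linD quot_map_linear) ls_part_sum quot_repK.
Qed.

Lemma quot_deg_direct q : quot_deg false q -> quot_deg true q -> q = 0.
Proof.
move=> [u Du ->] [v Dv /quot_map_eq/(S_gr false)].
rewrite (linB (ls_part_linear false)) (ls_part_homog _ Du) (ls_part_homog _ Dv) /= subr0.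
by move/quot_map_eq0.
Qed.

Lemma quot_br_linl (a : K) q r t : quot_br (a *: q + r) t = a *: quot_br q t + quot_br r t.
Proof.
rewrite -[q]quot_repK -[r]quot_repK -[t]quot_repK -quot_map_linear !quot_brE.
by rewrite lsbr_linl quot_map_linear.
Qed.

Lemma quot_br_linr (a : K) q r t : quot_br t (a *: q + r) = a *: quot_br t q + quot_br t r.
Proof.
rewrite -[q]quot_repK -[r]quot_repK -[t]quot_repK -quot_map_linear !quot_brE.
by rewrite lsbr_linr quot_map_linear.
Qed.

Lemma quot_br_deg i j q r : quot_deg i q -> quot_deg j r -> quot_deg (i (+) j) (quot_br q r).
Proof. by move=> [y Dy ->] [z Dz ->]; rewrite quot_brE; exists (lsbr A y z); first exact: lsbr_deg. Qed.

Lemma quot_br_anti i j q r : quot_deg i q -> quot_deg j r ->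
  quot_br q r = - (ssign K (i && j) *: quot_br r q).
Proof.
move=> [y Dy ->] [z Dz ->]; rewrite !quot_brE (lsbr_anti Dy Dz).
by rewrite (linN quot_map_linear) (linZ quot_map_linear).
Qed.

Lemma quot_br_jacobi i j k q r t : quot_deg i q -> quot_deg j r -> quot_deg k t ->
    ssign K (i && k) *: quot_br q (quot_br r t)
  + ssign K (j && i) *: quot_br r (quot_br t q)
  + ssign K (k && j) *: quot_br t (quot_br q r) = 0.
Proof.
move=> [x Dx ->] [y Dy ->] [z Dz ->]; rewrite !quot_brE.
have := congr1 quot_map (lsbr_jacobi Dx Dy Dz).
by rewrite !(linD quot_map_linear) !(linZ quot_map_linear).
Qed.

Definition ls_quot : lieSuper K :=
  LieSuper quot_deg0 quot_degD quot_degZ quot_deg_sum quot_deg_direct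
    quot_br_linl quot_br_linr quot_br_deg quot_br_anti quot_br_jacobi.

Lemma ls_quot_brE y z :
  lsbr ls_quot (quot_map y) (quot_map z) = quot_map (lsbr A y z).
Proof. exact: quot_brE. Qed.

Lemma quot_map_hom : ls_hom (quot_map : A -> ls_quot).
Proof. by split=> [|b y Dy|y z]; [exact: quot_map_linear | exists y | rewrite ls_quot_brE]. Qed.

Section Lift.
Variables (M : lieSuper K) (f : A -> M).
Hypotheses (f_hom : ls_hom f) (f_S : forall s, S s -> f s = 0).

Definition quot_lift (q : ls_quot) : M := f (quot_rep q).

Lemma quot_liftE y : quot_lift (quot_map y) = f y.
Proof.
apply/eqP; rewrite -subr_eq0 -(linB (ls_hom_linear f_hom)).
by rewrite f_S //; apply: quot_rep_map.
Qed.

Lemma quot_lift_hom : ls_hom quot_lift.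
Proof.
split=> [a q r|b _ [y Dy ->]|q r].
- by rewrite -[q]quot_repK -[r]quot_repK -quot_map_linear !quot_liftE (ls_hom_linear f_hom).
- by rewrite quot_liftE; apply: ls_hom_deg.
- by rewrite -[q]quot_repK -[r]quot_repK ls_quot_brE !quot_liftE ls_hom_br.
Qed.

End Lift.
End Quotient.

Local Open Scope classical_set_scope.

Lemma Zorn_set (T : Type) (P : set (set T)) :
  (forall C, C `<=` P -> total_on C subset -> exists2 U, P U & forall Y, C Y -> Y `<=` U) ->
  exists2 S, P S & forall S', P S' -> S `<=` S' -> S' `<=` S.
Proof.
move=> chain_ub; have [S0 PS0 _] : exists2 U, P U & forall Y, set0 Y -> Y `<=` U.
  by apply: chain_ub => [?|? ?] [].
pose R (Y Z : {Y | P Y}) := `[< sval Y `<=` sval Z >].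
have [||C Ctot|[S PS] Smax] := ZL_preorder (exist _ S0 PS0) (R := R).
- by move=> Y; apply/asboolP.
- by move=> Y Z W /asboolP YZ /asboolP ZW; apply/asboolP => t /YZ /ZW.
- have [|Y Z [Y' CY' <-] [Z' CZ' <-]|U PU ub] := chain_ub [set sval Y | Y in C].
  + by move=> _ [Y _ <-]; apply: svalP.
  + by have [/asboolP|/asboolP] := Ctot _ _ CY' CZ'; [left | right].
  + by exists (exist _ U PU) => Y CY; apply/asboolP/ub; exists Y.
- exists S => // S' PS' SS'.
  by have /asboolP := Smax (exist _ S' PS') (asboolT SS').
Qed.

Section GradedComplement.
Variables (K : fieldType) (A : lieSuper K) (I R : set A) (x : A).
Hypotheses (I_sub : is_subspace I) (I_gr : ls_graded I).
Hypotheses (R_sub : is_subspace R) (R_gr : ls_graded R) (IR : I `<=` R) (nIx : ~ I x).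

Definition graded_avoiding (S : set A) :=
  [/\ is_subspace S, ls_graded S, I `<=` S, S `<=` R & ~ S x].

Lemma graded_avoiding_chain C : C `<=` graded_avoiding -> total_on C subset ->
  exists2 U, graded_avoiding U & forall Y, C Y -> Y `<=` U.
Proof.
(* Adding I also gives the empty chain an upper bound. *)
move=> CP Ctot; pose C' Y := Y = I \/ C Y.
have C'P Y : C' Y -> graded_avoiding Y by case=> [-> | /CP //]; split.
have common u v : (exists2 Y, C' Y & Y u) -> (exists2 Y, C' Y & Y v) ->
    exists2 Y, C' Y & Y u /\ Y v.
  move=> [Y C'Y Yu] [Z C'Z Zv].
  have [YZ|ZY] : Y `<=` Z \/ Z `<=` Y.
    case: C'Y C'Z => [->|CY] [->|CZ]; [by left | left | right | exact: Ctot].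
    - by have [] := CP _ CZ.
    - by have [] := CP _ CY.
  - by exists Z => //; split=> //; apply: YZ.
  - by exists Y => //; split=> //; apply: ZY.
exists (fun u => exists2 Y, C' Y & Y u); last by move=> Y CY u Yu; exists Y; [right|].
split.
- split=> [|a u v Uu Uv]; first by exists I; [left | exact: subspace0].
  have [Y C'Y [Yu Yv]] := common _ _ Uu Uv.
  by exists Y => //; have [[_ Y_lin] _ _ _ _] := C'P _ C'Y; apply: Y_lin.
- by move=> b u [Y C'Y Yu]; exists Y => //; have [_ Y_gr _ _ _] := C'P _ C'Y; apply: Y_gr.
- by move=> u Iu; exists I; [left|].
- by move=> u [Y /C'P [_ _ _ YR _] /YR].
- by move=> [Y /C'P [_ _ _ _ nYx]].
Qed.

Lemma graded_avoiding_extend S b r : graded_avoiding S -> R r -> lsdeg A b r ->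
  ~ (exists c, S (x - c *: r)) -> graded_avoiding (fun y => exists c, S (y - c *: r)).
Proof.
move=> [S_sub S_gr IS SR _] Rr Dr nx; split=> //.
- split=> [|a u v [c Su] [c' Sv]]; first by exists 0; rewrite scale0r subr0; apply: subspace0.
  exists (a * c + c'); have [_ S_lin] := S_sub.
  have -> : a *: u + v - (a * c + c') *: r = a *: (u - c *: r) + (v - c' *: r).
    by rewrite scalerDl -scalerA opprD addrACA -scalerBr.
  exact: S_lin.
- move=> b' u [c /(S_gr b') Su]; exists (if b' == b then c else 0).
  move: Su; rewrite (linB (ls_part_linear b')) (linZ (ls_part_linear b')) (ls_part_homog _ Dr).
  by case: eqP; rewrite ?scaler0 ?scale0r.
- by move=> u /IS Su; exists 0; rewrite scale0r subr0.
- move=> u [c Su]; rewrite -(subrK (c *: r) u).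
  by apply: (subspaceD R_sub); [apply: SR | apply: (subspaceZ R_sub)].
Qed.

Variables (D : set A).
Hypotheses (D_sub : is_subspace D) (Dx : D x).

Lemma exists_graded_complement :
  exists2 S, graded_avoiding S & forall r, R r -> exists2 d, D d & S (r - d).
Proof.
have [S PS Smax] := Zorn_set graded_avoiding_chain.
have [S_sub S_gr IS SR nSx] := PS.
(* For homogeneous r in R, either x lies in S + K r, or S + K r is again
   admissible and then equals S by maximality. *)
have homog b r : R r -> lsdeg A b r -> exists2 d, D d & S (r - d).
  move=> Rr Dr; have [[c Sc] | nx] := pselect (exists c, S (x - c *: r)).
    have [c0 | nc0] := eqVneq c 0; first by move: Sc; rewrite c0 scale0r subr0.
    exists (c^-1 *: x); first exact: subspaceZ.
    have -> : r - c^-1 *: x = - c^-1 *: (x - c *: r).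
      by rewrite scaleNr scalerBr scalerA mulVf // scale1r opprB.
    exact: (subspaceZ S_sub).
  exists 0; first exact: subspace0.
  rewrite subr0; apply: (Smax _ (graded_avoiding_extend PS Rr Dr nx)).
    by move=> u Su; exists 0; rewrite scale0r subr0.
  by exists 1; rewrite scale1r subrr; apply: subspace0.
exists S => // r Rr.
have [d0 Dd0 S0] := homog false _ (R_gr false Rr) (ls_partP false r).
have [d1 Dd1 S1] := homog true _ (R_gr true Rr) (ls_partP true r).
exists (d0 + d1); first exact: subspaceD.
by rewrite -[r in r - _]ls_part_sum opprD addrACA; apply: subspaceD.
Qed.

End GradedComplement.

Local Close Scope classical_set_scope.

Section Presentation.
Variables (K : fieldType) (L F T : lieSuper K) (pi : F -> L) (lam : T -> L).
Hypotheses (pi_hom : ls_hom pi) (pi_surj : forall y, exists x, pi x = y).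
Hypothesis lam_univ : C_universal lam.

Local Notation R := (ls_ker pi).
Local Notation I := (ls_brk (@ls_all K F) R).

Let lam_C : in_C lam. Proof. by case: lam_univ. Qed.

Lemma brk_ker_sub_ker x : I x -> R x.
Proof.
apply: ls_span_ind; first exact: ls_ker_subspace.
by move=> _ [a [r [_ [Rr ->]]]]; apply: ls_ker_ideal.
Qed.

Lemma brk_ker_graded_ideal : ls_graded_ideal I.
Proof.
split; first exact: ls_span_subspace.
  by apply: ls_brk_graded; [by [] | exact: ls_ker_graded].
by move=> s x /brk_ker_sub_ker Rs; apply: ls_span_sub; exists x, s.
Qed.

Lemma brk_ker_swap r x : R r -> I (lsbr F r x).
Proof.
move: r x; apply/(lsbr_closed_swap (ls_span_subspace _) (ls_ker_graded pi_hom)).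
by move=> r x Rr; apply: ls_span_sub; exists x, r.
Qed.

Lemma quot_lift_in_C S (S_ideal : ls_graded_ideal S) (SR : forall s, S s -> R s) :
  (forall x, I x -> S x) -> (forall r, R r -> exists2 d, ls_derived d & S (r - d)) ->
  in_C (quot_lift (S_ideal := S_ideal) pi).
Proof.
move=> IS RS; have mu_hom := quot_lift_hom S_ideal pi_hom SR.
split=> // [y|q]; first by have [x <-] := pi_surj y; exists (quot_map S x); apply: quot_liftE.
rewrite -[q]quot_repK; set y := quot_rep _; rewrite /ls_ker quot_liftE // => Ry.
split; last first.
  move=> q'; rewrite -[q']quot_repK ls_quot_brE; apply/quot_map_eq0/IS.
  exact: brk_ker_swap.
have [d Fd Syd] := RS y Ry.
have -> : quot_map S y = quot_map S d by apply/quot_map_eq.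
exact: ls_hom_derived (quot_map_hom S_ideal) _ Fd.
Qed.

Variable g : F -> T.
Hypotheses (g_hom : ls_hom g) (lam_g : forall y, lam (g y) = pi y).

Lemma lift_brk_ker0 x : I x -> g x = 0.
Proof.
move: x; apply: (ls_span_ind (Q := ls_ker g)); first exact: ls_ker_subspace.
move=> _ [a [r [_ [Rr ->]]]]; rewrite /ls_ker (ls_hom_br g_hom).
by apply: (in_C_ker_centralr lam_C); rewrite lam_g.
Qed.

Lemma lift_onto_derived z : ls_derived z -> exists2 x, ls_derived x & g x = z.
Proof.
move: z; apply: (ls_span_ind (Q := fun z => exists2 x, ls_derived x & g x = z)).
  split=> [|a _ _ [x Fx <-] [y Fy <-]].
    by exists 0; [exact: subspace0 (ls_span_subspace _) | exact: lin0 (ls_hom_linear g_hom)].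
  by exists (a *: x + y); [apply: (ls_span_subspace _).2 | apply: ls_hom_linear].
move=> _ [a [b [_ [_ ->]]]].
have [a' ea] := pi_surj (lam a); have [b' eb] := pi_surj (lam b).
exists (lsbr F a' b'); first by apply: ls_span_sub; exists a', b'.
by rewrite (ls_hom_br g_hom); apply: (in_C_lsbr_eq lam_C); rewrite lam_g.
Qed.

Lemma lift_onto_ker z : ls_ker lam z -> exists x, (ls_derived x /\ R x) /\ g x = z.
Proof.
move=> lz; have [x Fx gx] := lift_onto_derived (in_C_ker_derived lam_C lz).
by exists x; split=> //; split=> //; rewrite /ls_ker -lam_g gx.
Qed.

Lemma lift_ker_on_derived x : ls_derived x -> g x = 0 -> I x.
Proof.
move=> Fx gx0; apply: contrapT => nIx.
have [I_sub I_gr _] := brk_ker_graded_ideal.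
have [S [S_sub S_gr IS SR nSx] RS] := exists_graded_complement I_sub I_gr
  (ls_ker_subspace pi_hom) (ls_ker_graded pi_hom) brk_ker_sub_ker nIx (ls_span_subspace _) Fx.
have S_ideal : ls_graded_ideal S by split=> // s y /SR Rs; apply/IS/ls_span_sub; exists y, s.
have mu_C := quot_lift_in_C S_ideal SR IS RS.
have [tau [tau_hom lam_tau]] := lam_univ.2 _ _ mu_C.
apply/nSx/(quot_map_eq0 S_ideal).
have <- : tau (g x) = quot_map S x.
  apply: (in_C_derived_agree mu_C (h1 := tau \o g)) Fx.
  - exact: ls_hom_comp.
  - exact: quot_map_hom.
  - by move=> y /=; rewrite lam_tau lam_g quot_liftE.
by rewrite gx0 (lin0 (ls_hom_linear tau_hom)).
Qed.

End Presentation.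

Theorem corollary4p4 (K : fieldType)
  (hK2 : (2 \notin [pchar K])%N) (hK3 : (3 \notin [pchar K])%N)
  (L : lieSuper K) (hL : ls_findim L)
  (X : Type) (deg : X -> bool) (F : lieSuper K) (iota : X -> F)
  (hF : ls_free deg iota)
  (pi : F -> L) (hpi : ls_hom pi) (hpis : forall y : L, exists x, pi x = y)
  (T : lieSuper K) (lam : T -> L) (hT : C_universal lam) :
  subquot_iso (ls_ker lam)
    (fun x : F => ls_derived x /\ ls_ker pi x)
    (ls_brk (@ls_all K F) (ls_ker pi)).
Proof.
have lam_C : in_C lam by case: hT.
have [g g_hom lam_g] := ls_free_lift hF (in_C_hom lam_C) (in_C_surj lam_C) hpi.
split.
  move=> x Ix; split; last exact: (brk_ker_sub_ker hpi Ix).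
  by apply: ls_span_mono Ix => _ [a [b [_ [_ ->]]]]; exists a, b.
exists g; split; first split.
- by move=> a x y _ _; apply: ls_hom_linear.
- by move=> b x _; apply: ls_hom_deg.
- by move=> x y _ _; apply: ls_hom_br.
- by move=> x [_ Rx]; rewrite /ls_ker lam_g.
- exact: (lift_onto_ker hpis hT g_hom lam_g).
- move=> x [Fx _]; split; first exact: (lift_ker_on_derived hpi hpis hT g_hom lam_g Fx).
  exact: (lift_brk_ker0 hT g_hom lam_g).
Qed.
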